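(* Let $O$ be a validated totally-ordered object, $S$ a sequence of operations, $i\neq j$ processes, and $op_i, op_j\notin S$ operations issued by $i$ and $j$ respectively, such that $\mathrm{valid}(S,op_i,i)=\mathit{True}$, $\mathrm{valid}(S,op_j,j)=\mathit{True}$, $\mathrm{valid}(S\|op_j,op_i,i)=\mathit{False}$ and $\mathrm{valid}(S\|op_i,op_j,j)=\mathit{False}$. Then, in an asynchronous system in which at most one of $i,j$ crashes, the following algorithm solves consensus between $i$ and $j$ (every correct one of them decides, both decide the same value, and the decided value was proposed by $i$ or $j$). The object $O$ is initialized with state $S$; $c_i,c_j$ are reliable atomic SWMR registers, written only by $i$ resp. $j$, initially $\bot$. Process $i$, proposing $v_i$: writes $v_i$ to $c_i$; calls $r\leftarrow O.\mathrm{apply}(op_i,i)$; if $r=(\mathit{NACK},-)$ it reads $v_j$ from $c_j$ and decides it, otherwise it decides $v_i$. Process $j$ executes the symmetric code with $v_j$, $c_j$, $op_j$ and reading $c_i$.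
   Context: Validated object: given a predicate $\mathrm{valid}(\cdot, op, i)$ and function $\mathrm{execute}(\cdot, op, i)$, first argument a strictly partially ordered set of operations (a sequence when totally ordered), $op$ an operation, $i$ its issuer. Clients use $\mathrm{apply}(op,i)$, returning $(\mathit{ACK}, r)$ if $op$ is found valid and executed with result $r$, and $(\mathit{NACK},-)$ otherwise. For a sequence $S$, $S\|op$ denotes $S$ followed by $op$. The history of a run contains only operations for which $\mathrm{apply}$ returns $\mathit{ACK}$; $C(R)$ is the set of complete such operations; $op\rightarrow op'$ means the response of $op$ precedes the invocation of $op'$. Validated totally-ordered object: in every run $R$ there is a total order $\ll$ on $C(R)$ such that (1) $op\rightarrow op'$ implies $op\ll op'$; (2) for every $op\in C(R)$ issued by $i$, with $P(op)=\{op'\in C(R): op'\ll op\}$, $\mathrm{valid}(\langle P(op),\ll\rangle,op,i)=\mathit{True}$ and $op$ returns $\mathrm{execute}(\langle P(op),\ll\rangle,op,i)$. The object $O$ is assumed reliable (it never fails). *)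

From mathcomp Require Import all_boot.
Set Implicit Arguments. Unset Strict Implicit. Unset Printing Implicit Defensive.

Section Model.
Variables (Pid Op : eqType) (V Res : Type).

(* EWrite p v      : p writes v into its own SWMR register c_p
   EInv p o        : p invokes O.apply(o, p)
   EResp p b r     : the object responds to p's pending apply:
                     (ACK, r) if b = true, (NACK, -) if b = false
   ERead p x       : p reads the register of the other process, obtaining x
                     (None = bottom)
   EDecide p x     : p decides x *)
Inductive event :=
| EWrite of Pid & V
| EInv of Pid & Op
| EResp of Pid & bool & Res
| ERead of Pid & option V
| EDecide of Pid & option V.

Definition proc (e : event) : Pid :=
  match e with
  | EWrite p _ | EInv p _ | EResp p _ _ | ERead p _ | EDecide p _ => p
  end.

(* A run: at each (discrete, global) time at most one event happens.
   Arbitrary interleavings model asynchrony. *)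
Definition run := nat -> option event.

Definition events_before (R : run) (t : nat) : seq event := pmap R (iota 0 t).

Definition local (R : run) (p : Pid) (t : nat) : seq event :=
  [seq e <- events_before R t | proc e == p].

Definition reg (R : run) (q : Pid) (t : nat) : option V :=
  foldl (fun acc e => match e with
                      | EWrite p v => if p == q then Some v else acc
                      | _ => acc end) None (events_before R t).

(* The code of a process p proposing v and applying operation o:
   write v to c_p; r <- O.apply(o,p); if r = NACK then read c_q and decide
   the value read, else decide v.  [code_step p v o h cq e] says that e is
   the next step of p after local history h, when c_q currently holds cq. *)
Definition code_step (p : Pid) (v : V) (o : Op) (h : seq event)
  (cq : option V) (e : event) : Prop :=
  match h with
  | [::] => e = EWrite p v
  | [:: _] => e = EInv p o
  | [:: _; _] => exists b r, e = EResp p b r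
  | [:: _; _; EResp _ true _] => e = EDecide p (Some v)
  | [:: _; _; EResp _ false _] => e = ERead p cq
  | [:: _; _; EResp _ false _; ERead _ x] => e = EDecide p x
  | _ => False
  end.

Definition follows_code (R : run) (i j : Pid) (vi vj : V) (opi opj : Op) :=
  forall t e, R t = Some e ->
    (proc e = i /\ code_step i vi opi (local R i t) (reg R j t) e) \/
    (proc e = j /\ code_step j vj opj (local R j t) (reg R i t) e).

Definition resp_of (R : run) (t t' : nat) (p : Pid) (b : bool) (r : Res) :=
  t < t' /\ R t' = Some (EResp p b r) /\
  forall u, t < u < t' -> forall b' r', R u <> Some (EResp p b' r').

Definition complete (R : run) (t : nat) :=
  exists p o t' b r, R t = Some (EInv p o) /\ resp_of R t t' p b r.

Definition acked_ops (L : seq (nat * Op * bool)) : seq Op :=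
  [seq x.1.2 | x <- L & x.2].

(* O, initialized with state S, is a validated totally-ordered object in run R:
   there is a total order (the list L, entries = (invocation time, op, ACK?))
   on the complete operations such that (1) it extends real-time order, and
   (2) each ACKed op is valid w.r.t. S followed by the ACKed ops preceding it
   and returns execute(...) on it; each NACKed op is not valid there. *)
Definition validated_total (valid : seq Op -> Op -> Pid -> bool)
  (execute : seq Op -> Op -> Pid -> Res) (S : seq Op) (R : run) : Prop :=
  exists L : seq (nat * Op * bool),
    [/\ uniq [seq x.1.1 | x <- L],
        (forall t, t \in [seq x.1.1 | x <- L] <-> complete R t),
        (forall pre x post y, L = pre ++ x :: post -> y \in post ->
           forall t' p b r, resp_of R y.1.1 t' p b r -> ~ (t' < x.1.1)) &
        (forall pre x post, L = pre ++ x :: post ->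
           exists p t' r, R x.1.1 = Some (EInv p x.1.2) /\
             resp_of R x.1.1 t' p x.2 r /\
             (if x.2 then valid (S ++ acked_ops pre) x.1.2 p
                          /\ r = execute (S ++ acked_ops pre) x.1.2 p
              else valid (S ++ acked_ops pre) x.1.2 p = false))].

Definition decided_before (R : run) (p : Pid) (t : nat) :=
  exists u x, u < t /\ R u = Some (EDecide p x).

(* p is correct (does not crash): as long as it has not terminated, it
   eventually takes another step. *)
Definition correct (R : run) (p : Pid) :=
  forall t, ~ decided_before R p t ->
    exists t' e, t <= t' /\ R t' = Some e /\ proc e = p.

End Model.

Arguments EWrite {Pid Op V Res}.
Arguments EInv {Pid Op V Res}.
Arguments EResp {Pid Op V Res}.
Arguments ERead {Pid Op V Res}.
Arguments EDecide {Pid Op V Res}.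

From mathcomp Require Import all_boot.
From Stdlib Require Import Classical.
Set Implicit Arguments. Unset Strict Implicit. Unset Printing Implicit Defensive.

(* Each process takes at most five steps, so a correct process decides.  Only the
   invocations of [opi] and [opj] can appear in the linearization, each at most
   once.  The first one is checked against [S], hence acknowledged; the second
   is then checked against [S] extended by the first, hence rejected.  So the
   processes can neither both be acknowledged (both would come first) nor both
   be rejected (a rejection needs an acknowledged predecessor).  The rejected
   process is linearized after the other's invocation, so by real-time order it
   reads the other's register after that was written, and both decide the value
   of the acknowledged process. *)

Section CodeStep.
Variables (Pid Op : eqType) (V Res : Type).
Local Notation event := (event Pid Op V Res).
Variables (p : Pid) (v : V) (o : Op) (cq : option V).

Variant code_step_spec : seq event -> event -> Prop :=
| StepWrite : code_step_spec [::] (EWrite p v)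
| StepInvoke a : code_step_spec [:: a] (EInv p o)
| StepRespond a c b r : code_step_spec [:: a; c] (EResp p b r)
| StepDecideAck a c q r : code_step_spec [:: a; c; EResp q true r] (EDecide p (Some v))
| StepRead a c q r : code_step_spec [:: a; c; EResp q false r] (ERead p cq)
| StepDecideNack a c q r y x :
    code_step_spec [:: a; c; EResp q false r; ERead y x] (EDecide p x).

Lemma code_stepP (h : seq event) e : code_step p v o h cq e -> code_step_spec h e.
Proof.
case: h => [->|a [->|c [[b [r ->]]|d h]]]; try constructor.
case: d => // q [] r; case: h => [->|f h]; try constructor; first by [].
by case: f => // y x; case: h => // ->; constructor.
Qed.

Lemma code_step_size (h : seq event) e : code_step p v o h cq e -> size h <= 4.
Proof. by case/code_stepP. Qed.

Lemma code_step_write (h : seq event) p' v' : code_step p v o h cq (EWrite p' v') ->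
  [/\ h = [::], p' = p & v' = v].
Proof. by move/code_stepP; move E: (EWrite p' v') => e s; case: s E => // -[-> ->]. Qed.

Lemma code_step_invoke (h : seq event) p' o' : code_step p v o h cq (EInv p' o') ->
  [/\ size h = 1, p' = p & o' = o].
Proof. by move/code_stepP; move E: (EInv p' o') => e s; case: s E => // a [-> ->]. Qed.

Lemma code_step_respond (h : seq event) p' b r : code_step p v o h cq (EResp p' b r) ->
  size h = 2 /\ p' = p.
Proof. by move/code_stepP; move E: (EResp p' b r) => e s; case: s E => // a c b' r' [->]. Qed.

Lemma code_step_decide (h : seq event) p' x : code_step p v o h cq (EDecide p' x) ->
  p' = p /\ ((exists a c q r, h = [:: a; c; EResp q true r] /\ x = Some v) \/
             (exists a c q r y, h = [:: a; c; EResp q false r; ERead y x])).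
Proof.
move/code_stepP; move E: (EDecide p' x) => e s; case: s E => // a c q r.
- by case=> -> <-; split; [|left; exists a, c, q, r].
- by move=> y x' [-> ->]; split; [|right; exists a, c, q, r, y].
Qed.
End CodeStep.

Section Runs.
Variables (Pid Op : eqType) (V Res : Type) (R : run Pid Op V Res).

Lemma events_beforeS t : events_before R t.+1 =
  events_before R t ++ (if R t is Some e then [:: e] else [::]).
Proof. by rewrite /events_before -addn1 iotaD pmap_cat /= add0n; case: (R t). Qed.

Lemma localS p t : local R p t.+1 = local R p t ++
  (if R t is Some e then (if proc e == p then [:: e] else [::]) else [::]).
Proof.
by rewrite /local events_beforeS filter_cat; case: (R t) => //= e; case: (proc e == p).
Qed.

Lemma local_split_event p t h1 e h2 : local R p t = h1 ++ e :: h2 ->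
  exists u, [/\ u < t, R u = Some e, proc e = p & local R p u = h1].
Proof.
elim: t h2 => [|t IH] h2; first by rewrite /local /events_before /=; case: h1.
have IHS h : local R p t = h1 ++ e :: h -> exists u, [/\ u < t.+1, R u = Some e,
    proc e = p & local R p u = h1].
  by move=> /IH [u [lt_ut *]]; exists u; split=> //; apply: leqW.
rewrite localS; case Rt: (R t) => [e'|]; last by rewrite cats0; apply: IHS.
case: eqP => [pe'|_]; last by rewrite cats0; apply: IHS.
case/lastP: h2 => [|h2 z]; first by rewrite !cats1 => /rcons_inj [<- <-]; exists t.
by rewrite -rcons_cons -rcons_cat cats1 => /rcons_inj [/IHS].
Qed.

Lemma size_local_leq p t1 t2 : t1 <= t2 -> size (local R p t1) <= size (local R p t2).
Proof.
move/subnKC <-; elim: (t2 - t1) => [|d IH]; first by rewrite addn0.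
by rewrite addnS localS size_cat; apply: leq_trans IH (leq_addr _ _).
Qed.

Lemma size_local_after_step p t1 t2 e : R t1 = Some e -> proc e = p -> t1 < t2 ->
  size (local R p t1) < size (local R p t2).
Proof.
move=> Rt1 pe lt12; apply: leq_trans (size_local_leq p lt12).
by rewrite localS Rt1 pe eqxx size_cat addn1.
Qed.

Lemma local_size_inj p t1 t2 e1 e2 : R t1 = Some e1 -> proc e1 = p ->
  R t2 = Some e2 -> proc e2 = p -> size (local R p t1) = size (local R p t2) -> t1 = t2.
Proof.
move=> Rt1 pe1 Rt2 pe2 eq_size; case: (ltngtP t1 t2) => // lt_t.
- by have := size_local_after_step Rt1 pe1 lt_t; rewrite eq_size ltnn.
- by have := size_local_after_step Rt2 pe2 lt_t; rewrite eq_size ltnn.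
Qed.

Lemma regS q t : reg R q t.+1 =
  (if R t is Some (EWrite p v) then (if p == q then Some v else reg R q t) else reg R q t).
Proof. by rewrite /reg events_beforeS foldl_cat; case: (R t) => [[]|]. Qed.

Lemma reg_after_write q vq tw t : (forall u w, R u = Some (EWrite q w) -> w = vq) ->
  R tw = Some (EWrite q vq) -> tw < t -> reg R q t = Some vq.
Proof.
move=> only_vq Rtw; elim: t => [|t IH] //.
rewrite ltnS leq_eqVlt regS => /predU1P [<-|/IH reg_t]; first by rewrite Rtw eqxx.
case Rt: (R t) => [[p w||||]|] //; case: eqP => // pq.
by move: Rt; rewrite pq => /only_vq ->.
Qed.
Definition runs_code (p q : Pid) (vp : V) (opp : Op) :=
  forall t e, R t = Some e -> proc e = p ->
    code_step p vp opp (local R p t) (reg R q t) e.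

Lemma follows_code_runs i j vi vj opi opj :
  i != j -> follows_code R i j vi vj opi opj -> runs_code i j vi opi.
Proof.
move=> neq_ij code t e Rt pe; case: (code t e Rt) => [[]|[pj]] //.
by rewrite pe in pj; rewrite pj eqxx in neq_ij.
Qed.

Lemma follows_code_sym i j vi vj opi opj :
  follows_code R i j vi vj opi opj -> follows_code R j i vj vi opj opi.
Proof. by move=> code t e /code []; [right|left]. Qed.

Lemma follows_code_proc i j vi vj opi opj :
  follows_code R i j vi vj opi opj -> forall t e, R t = Some e -> proc e = i \/ proc e = j.
Proof. by move=> code t e /code [[]|[]]; [left|right]. Qed.

Section Process.
Variables (p q : Pid) (vp : V) (opp : Op).
Hypothesis p_code : runs_code p q vp opp.

Lemma size_local_le t : size (local R p t) <= 5.
Proof.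
elim: t => [|t IH] //; rewrite localS.
case Rt: (R t) => [e|]; last by rewrite cats0.
case: eqP => pe; last by rewrite cats0.
by rewrite size_cat addn1 ltnS (code_step_size (p_code Rt pe)).
Qed.

Lemma write_value u w : R u = Some (EWrite p w) -> w = vp.
Proof. by move=> Ru; case: (code_step_write (p_code Ru erefl)). Qed.

Lemma invocation_op u o : R u = Some (EInv p o) -> o = opp.
Proof. by move=> Ru; case: (code_step_invoke (p_code Ru erefl)). Qed.

Lemma write_before_invocation u o : R u = Some (EInv p o) ->
  exists2 tw, tw < u & R tw = Some (EWrite p vp).
Proof.
move=> Ru; case: (code_step_invoke (p_code Ru erefl)) => + _ _.
case E: (local R p u) => [|a []] // _.
have [tw [lt_tw Rtw pa local_tw]] := local_split_event (E : _ = [::] ++ a :: [::]).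
have Ea : a = EWrite p vp by move: (p_code Rtw pa); rewrite local_tw.
by exists tw; rewrite // Rtw Ea.
Qed.

Lemma invocation_unique t1 t2 o1 o2 :
  R t1 = Some (EInv p o1) -> R t2 = Some (EInv p o2) -> t1 = t2.
Proof.
move=> Rt1 Rt2; apply: (local_size_inj Rt1 erefl Rt2 erefl).
case: (code_step_invoke (p_code Rt1 erefl)) => -> _ _.
by case: (code_step_invoke (p_code Rt2 erefl)).
Qed.

Lemma response_unique t1 t2 b1 b2 r1 r2 :
  R t1 = Some (EResp p b1 r1) -> R t2 = Some (EResp p b2 r2) -> t1 = t2.
Proof.
move=> Rt1 Rt2; apply: (local_size_inj Rt1 erefl Rt2 erefl).
case: (code_step_respond (p_code Rt1 erefl)) => -> _.
by case: (code_step_respond (p_code Rt2 erefl)).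
Qed.

Lemma response_invocation u1 b r : R u1 = Some (EResp p b r) ->
  exists u0, R u0 = Some (EInv p opp) /\ resp_of R u0 u1 p b r.
Proof.
move=> Ru1; case: (code_step_respond (p_code Ru1 erefl)) => + _.
case E: (local R p u1) => [|a [|c []]] // _.
have [u0 [lt_u01 Ru0 pc local_u0]] := local_split_event (E : _ = [:: a] ++ c :: [::]).
have Ec : c = EInv p opp by move: (p_code Ru0 pc); rewrite local_u0.
exists u0; split; first by rewrite Ru0 Ec.
do 2!split=> //; move=> u /andP [_ lt_u1] b' r' Ru.
by rewrite (response_unique Ru Ru1) ltnn in lt_u1.
Qed.

Lemma decision_shape t x : R t = Some (EDecide p x) ->
  exists u1 b r, R u1 = Some (EResp p b r) /\
    (if b then x = Some vp else exists2 u2, u1 < u2 & x = reg R q u2).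
Proof.
move=> Rt; case: (code_step_decide (p_code Rt erefl)) => _.
case=> [[a [c [q' [r [E ->]]]]] | [a [c [q' [r [y E]]]]]].
  have [u1 [_ Ru1 /= pq' _]] := local_split_event (E : _ = [:: a; c] ++ _ :: [::]).
  by exists u1, true, r; rewrite -pq'.
have [u2 [_ Ru2 py local_u2]] :=
  local_split_event (E : _ = [:: a; c; EResp q' false r] ++ _ :: [::]).
have [u1 [lt_u12 Ru1 /= pq' _]] :=
  local_split_event (local_u2 : _ = [:: a; c] ++ _ :: [::]).
move: (p_code Ru2 py); rewrite local_u2 => -[_ ->].
by exists u1, false, r; rewrite -pq'; split=> //; exists u2.
Qed.

Lemma correct_decides : correct R p -> exists t x, R t = Some (EDecide p x).
Proof.
move=> p_correct; apply: NNPP => never.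
have steps n : exists t, n <= size (local R p t).
  elim: n => [|n [t le_nt]]; first by exists 0.
  have [t' [e [le_tt' [Rt' pe]]]] : exists t' e, t <= t' /\ R t' = Some e /\ proc e = p.
    by apply: p_correct => -[u [x [_ Ru]]]; apply: never; exists u, x.
  exists t'.+1; apply: leq_ltn_trans (leq_trans le_nt (size_local_leq p le_tt')) _.
  exact: size_local_after_step Rt' pe (ltnSn t').
by have [t le6] := steps 6; have := leq_trans le6 (size_local_le t).
Qed.
End Process.

Definition responded (p : Pid) (b : bool) := exists u r, R u = Some (EResp p b r).

Section Linearization.
Variables (valid : seq Op -> Op -> Pid -> bool) (execute : seq Op -> Op -> Pid -> Res)
  (S : seq Op) (L : seq (nat * Op * bool)).
Hypothesis L_uniq : uniq [seq x.1.1 | x <- L].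
Hypothesis L_complete : forall t, t \in [seq x.1.1 | x <- L] <-> complete R t.
Hypothesis L_realtime : forall pre x post y, L = pre ++ x :: post -> y \in post ->
  forall t' p b r, resp_of R y.1.1 t' p b r -> ~ (t' < x.1.1).
Hypothesis L_legal : forall pre x post, L = pre ++ x :: post ->
  exists p t' r, R x.1.1 = Some (EInv p x.1.2) /\ resp_of R x.1.1 t' p x.2 r /\
    (if x.2 then valid (S ++ acked_ops pre) x.1.2 p
                 /\ r = execute (S ++ acked_ops pre) x.1.2 p
     else valid (S ++ acked_ops pre) x.1.2 p = false).

Lemma entry_invocation x : x \in L ->
  exists p t' r, R x.1.1 = Some (EInv p x.1.2) /\ resp_of R x.1.1 t' p x.2 r.
Proof.
move=> xL; case/splitPr def_L: L / xL => [pre post].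
by have [p [t' [r [Rx [resp _]]]]] := L_legal def_L; exists p, t', r.
Qed.

Lemma entry_valid pre x post p o : L = pre ++ x :: post ->
  R x.1.1 = Some (EInv p o) -> x.1.2 = o /\ valid (S ++ acked_ops pre) o p = x.2.
Proof.
move=> def_L Rx; have [p' [t' [r [Rx' [_ valid_x]]]]] := L_legal def_L.
move: Rx' valid_x; rewrite Rx => -[<- <-] valid_x; split=> //.
by case: x.2 valid_x => [[]|].
Qed.

Section OneProcess.
Variables (p q : Pid) (vp : V) (opp : Op).
Hypothesis p_code : runs_code p q vp opp.

Lemma entry_flag x o u1 b r : x \in L -> R x.1.1 = Some (EInv p o) ->
  R u1 = Some (EResp p b r) -> x.2 = b.
Proof.
move=> /entry_invocation [p' [t' [r' [Rx [_ [Rt' _]]]]]] Rx' Ru1.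
move: Rx Rt'; rewrite Rx' => -[<- _] Rt'.
have t'_u1 := response_unique p_code Rt' Ru1.
by move: Rt'; rewrite t'_u1 Ru1 => -[].
Qed.

Lemma entry_of_invocation u0 u1 b r :
  R u0 = Some (EInv p opp) -> resp_of R u0 u1 p b r ->
  exists pre x post, [/\ L = pre ++ x :: post, x.1.1 = u0 & x.2 = b].
Proof.
move=> Ru0 resp; have [_ [Ru1 _]] := resp.
have /mapP [x xL u0E] : u0 \in [seq x.1.1 | x <- L].
  by apply/L_complete; exists p, opp, u1, b, r.
rewrite u0E in Ru0; have x_b := entry_flag xL Ru0 Ru1.
by case/splitPr def_L: L / xL => [pre post]; exists pre, x, post.
Qed.
End OneProcess.

Section TwoProcesses.
Variables (p q : Pid) (vp vq : V) (opp opq : Op).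
Hypotheses (neq_pq : p != q) (code : follows_code R p q vp vq opp opq).

Let p_code : runs_code p q vp opp := follows_code_runs neq_pq code.
Let neq_qp : q != p. Proof. by rewrite eq_sym. Qed.
Let q_code : runs_code q p vq opq := follows_code_runs neq_qp (follows_code_sym code).

Lemma prefix_of_entry pre x post : L = pre ++ x :: post -> R x.1.1 = Some (EInv p opp) ->
  pre = [::] \/ exists y, pre = [:: y] /\ R y.1.1 = Some (EInv q opq).
Proof.
move=> EL Rx.
have := L_uniq; rewrite EL map_cat cat_uniq /= negb_or.
case/and3P=> uniq_pre /andP [x_notin _] _.
have inv_q y : y \in pre -> R y.1.1 = Some (EInv q opq).
  move=> y_pre; have yL : y \in L by rewrite EL mem_cat y_pre.
  have [p' [_ [_ [Ry _]]]] := entry_invocation yL.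
  case: (follows_code_proc code Ry) => /= p'E; rewrite p'E in Ry.
    by case/negP: x_notin; rewrite -(invocation_unique p_code Ry Rx); apply: map_f.
  by rewrite Ry -(invocation_op q_code Ry).
case: pre EL uniq_pre x_notin inv_q => [|y [|z pre]] _ uniq_pre _ inv_q; [by left| |].
  by right; exists y; rewrite (inv_q y) ?mem_head.
have z_pre : z \in [:: y, z & pre] by rewrite !inE eqxx orbT.
have y_z := invocation_unique q_code (inv_q y (mem_head _ _)) (inv_q z z_pre).
by move: uniq_pre; rewrite /= y_z inE eqxx.
Qed.

Lemma nack_after_ack u0 u1 r : valid S opp p = true ->
  R u0 = Some (EInv p opp) -> resp_of R u0 u1 p false r ->
  exists2 y, y \in L & [/\ R y.1.1 = Some (EInv q opq), y.2 & y.1.1 < u1].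
Proof.
move=> valid_p Ru0 resp.
have [pre [x [post [EL x_u0 x_nack]]]] := entry_of_invocation p_code Ru0 resp.
rewrite -x_u0 in Ru0 resp; have [_] := entry_valid EL Ru0; rewrite x_nack => nvalid.
case: (prefix_of_entry EL Ru0) => [Epre|[y [Epre Ry]]]; subst pre.
  by rewrite cats0 valid_p in nvalid.
have y_acked : y.2.
  by move: nvalid; rewrite /acked_ops /=; case: (y.2); rewrite ?cats0 ?valid_p.
exists y; first by rewrite EL mem_head.
split=> //; have [_ [Ru1 _]] := resp.
have := L_realtime (EL : L = [::] ++ y :: x :: post) (mem_head _ _) resp.
move/negP; rewrite -leqNgt leq_eqVlt => /predU1P [Eu1|//].
by move: Ry; rewrite Eu1 Ru1.
Qed.

Lemma decision_value t x : valid S opp p = true -> R t = Some (EDecide p x) ->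
  responded p true /\ x = Some vp \/ responded p false /\ x = Some vq.
Proof.
move=> valid_p Rt; have [u1 [[] [r [Ru1 Ex]]]] := decision_shape p_code Rt.
  by left; split=> //; exists u1, r.
right; split; first by exists u1, r.
have [u2 lt_u12 ->] := Ex; have [u0 [Ru0 resp]] := response_invocation p_code Ru1.
have [y _ [Ry _ lt_yu1]] := nack_after_ack valid_p Ru0 resp.
have [tw lt_tw Rtw] := write_before_invocation q_code Ry.
apply: reg_after_write (write_value q_code) Rtw _.
exact: ltn_trans lt_tw (ltn_trans lt_yu1 lt_u12).
Qed.

Lemma not_both_nacked : valid S opp p = true ->
  responded p false -> responded q false -> False.
Proof.
move=> valid_p [u1 [r Ru1]] [w1 [r' Rw1]].
have [u0 [Ru0 resp]] := response_invocation p_code Ru1.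
have [y yL [Ry y_acked _]] := nack_after_ack valid_p Ru0 resp.
by rewrite (entry_flag q_code yL Ry Rw1) in y_acked.
Qed.

Lemma ack_first : valid (rcons S opq) opp p = false ->
  responded p true -> responded q true ->
  exists x post, L = x :: post /\ R x.1.1 = Some (EInv p opp).
Proof.
move=> nvalid_p [u1 [r Ru1]] [w1 [r' Rw1]].
have [u0 [Ru0 resp]] := response_invocation p_code Ru1.
have [pre [x [post [EL x_u0 x_ack]]]] := entry_of_invocation p_code Ru0 resp.
rewrite -x_u0 in Ru0; have [_] := entry_valid EL Ru0; rewrite x_ack.
case: (prefix_of_entry EL Ru0) => [Epre|[y [Epre Ry]]]; subst pre; first by exists x, post.
have yL : y \in L by rewrite EL mem_head.
have y_ack := entry_flag q_code yL Ry Rw1.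
have [y_opq _] := entry_valid (EL : L = [::] ++ y :: _) Ry.
by rewrite /acked_ops /= y_ack cats1 y_opq nvalid_p.
Qed.
End TwoProcesses.
End Linearization.
End Runs.

Theorem mainTheorem7 (Pid Op : eqType) (V Res : Type)
  (valid : seq Op -> Op -> Pid -> bool) (execute : seq Op -> Op -> Pid -> Res)
  (S : seq Op) (i j : Pid) (opi opj : Op) :
  i != j -> opi \notin S -> opj \notin S ->
  valid S opi i = true -> valid S opj j = true ->
  valid (rcons S opj) opi i = false -> valid (rcons S opi) opj j = false ->
  forall (vi vj : V) (R : run Pid Op V Res),
    follows_code R i j vi vj opi opj ->
    validated_total valid execute S R ->
    (correct R i \/ correct R j) ->
    [/\ (forall p, (p = i \/ p = j) -> correct R p ->
           exists t x, R t = Some (EDecide p x)),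
        (forall t1 t2 x y, R t1 = Some (EDecide i x) ->
           R t2 = Some (EDecide j y) -> x = y) &
        (forall t p x, R t = Some (EDecide p x) -> x = Some vi \/ x = Some vj)].
Proof.
move=> neq_ij _ _ valid_i valid_j nvalid_i nvalid_j vi vj R code
  [L [L_uniq L_complete L_realtime L_legal]] _.
have neq_ji : j != i by rewrite eq_sym.
have code' := follows_code_sym code.
have value_i := decision_value L_uniq L_complete L_realtime L_legal neq_ij code valid_i.
have value_j := decision_value L_uniq L_complete L_realtime L_legal neq_ji code' valid_j.
split.
- move=> p [->|->].
  + exact: correct_decides (follows_code_runs neq_ij code).
  + exact: correct_decides (follows_code_runs neq_ji code').
- move=> t1 t2 x y /value_i [[ack_i ->]|[nack_i ->]] /value_j [[ack_j ->]|[nack_j ->]] //.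
  + have head_i := ack_first L_uniq L_complete L_legal neq_ij code nvalid_i ack_i ack_j.
    have head_j := ack_first L_uniq L_complete L_legal neq_ji code' nvalid_j ack_j ack_i.
    move: head_i head_j => [e [post [-> Re]]] [_ [_ [[<- _] Re']]].
    by move: Re' neq_ij; rewrite Re => -[->]; rewrite eqxx.
  + by case: (not_both_nacked L_uniq L_complete L_realtime L_legal neq_ij code valid_i nack_i).
- move=> t p x Rt; case: (follows_code_proc code Rt) => /= Ep; rewrite Ep in Rt.
  + by case: (value_i _ _ Rt) => [[_ ->]|[_ ->]]; [left|right].
  + by case: (value_j _ _ Rt) => [[_ ->]|[_ ->]]; [right|left].
Qed.
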